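(* A ring $R$ is left noetherian if and only if every left $R$-module is strict ${}_R\sharp$-atomic. In particular, every abelian group is strict $\sharp$-atomic over $\mathbb Z$.
   Context: Modules are left $R$-modules. ${}_R\sharp$ denotes the class of absolutely pure (FP-injective) left $R$-modules. pp formulas and $\phi(M)$ as usual. For a class $\mathcal L$, $(M,\bar m)$ is an $\mathcal L$-free realization of a pp formula $\phi$ if $\bar m\in\phi(M)$ and for every $L\in\mathcal L$ and $\bar c\in\phi(L)$ there is a homomorphism $M\to L$ sending $\bar m$ to $\bar c$; $M$ is strict $\mathcal L$-atomic if every finite tuple in $M$ is an $\mathcal L$-free realization of some pp formula. *)

From HB Require Import structures.
From mathcomp Require Import all_boot all_order all_algebra.
Set Implicit Arguments. Unset Strict Implicit. Unset Printing Implicit Defensive.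
Import GRing.Theory.
Local Open Scope ring_scope.

Definition left_ideal (R : pzRingType) (I : R -> Prop) : Prop :=
  [/\ I 0, (forall x y, I x -> I y -> I (x + y)) & (forall r x, I x -> I (r * x))].

Definition left_noetherian (R : pzRingType) : Prop :=
  forall I : R -> Prop, left_ideal I ->
    exists n (g : 'I_n -> R), (forall i, I (g i)) /\
      (forall x, I x <-> exists c : 'I_n -> R, x = \sum_(i < n) c i * g i).

(* A pp formula in n free variables x_0..x_{n-1}:
   exists y_0..y_{k-1}, /\_{i<m} (sum_j A i j x_j + sum_l B i l y_l = 0). *)
Record ppf (R : pzRingType) (n : nat) := PPF {
  pp_k : nat;
  pp_m : nat;
  pp_A : 'I_pp_m -> 'I_n -> R;
  pp_B : 'I_pp_m -> 'I_pp_k -> R }.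
Arguments pp_k {R n} p.
Arguments pp_m {R n} p.
Arguments pp_A {R n} p _ _.
Arguments pp_B {R n} p _ _.

Definition pp_holds (R : pzRingType) (n : nat) (phi : ppf R n)
    (M : lmodType R) (x : 'I_n -> M) : Prop :=
  exists y : 'I_(pp_k phi) -> M, forall i : 'I_(pp_m phi),
    \sum_(j < n) pp_A phi i j *: x j + \sum_(l < pp_k phi) pp_B phi i l *: y l = 0.

Definition abs_pure (R : pzRingType) (M : lmodType R) : Prop :=
  forall (N : lmodType R) (e : {linear M -> N}), injective e ->
    forall n (phi : ppf R n) (x : 'I_n -> M),
      pp_holds phi (fun j => e (x j)) -> pp_holds phi x.

Definition free_realization (R : pzRingType) (C : lmodType R -> Prop)
    (n : nat) (phi : ppf R n) (M : lmodType R) (x : 'I_n -> M) : Prop :=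
  pp_holds phi x /\
  forall (L : lmodType R), C L -> forall c : 'I_n -> L, pp_holds phi c ->
    exists f : {linear M -> L}, forall j, f (x j) = c j.

Definition strict_atomic (R : pzRingType) (C : lmodType R -> Prop)
    (M : lmodType R) : Prop :=
  forall n (x : 'I_n -> M), exists phi : ppf R n, free_realization C phi x.

From HB Require Import structures.
From mathcomp Require Import all_boot all_order all_algebra.
From mathcomp Require Import boolp classical_sets functions.
From mathcomp Require Import lra.
Set Implicit Arguments. Unset Strict Implicit. Unset Printing Implicit Defensive.
Import Order.TTheory GRing.Theory Num.Theory.
Local Open Scope ring_scope.

(* For a tuple m of M, the relations {r | sum_j r_j m_j = 0}
   form a submodule of R^n, finitely generated (by rows G_i) when R is
   noetherian.  The formula /\_i sum_j G_ij x_j = 0 is freely realized by m: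
   a solution c in an absolutely pure L satisfies every relation of m, so
   m |-> c extends to M -> L, because over a noetherian ring absolutely pure
   modules satisfy Baer's condition and Baer's condition gives extensions of
   partial linear maps (Zorn's lemma).  For a left ideal I, R c ~ R/I sits inside an injective
   (hence absolutely pure) module; a formula phi freely realizing c yields
   scalars z_i in I, and mapping c to the generator of R/J, J = sum_i R z_i,
   shows I = J. *)

Definition frac (q : rat) : rat := q - (Num.floor q)%:~R.

Lemma frac_addz q (n : int) : frac (q + n%:~R) = frac q.
Proof. by rewrite /frac floorDrz ?intr_int // intrKfloor intrD; lra. Qed.

Lemma floor_frac q : Num.floor (frac q) = 0.
Proof. by rewrite /frac -intrN floorDrz ?intr_int // intrKfloor subrr. Qed.

Lemma frac_id q : Num.floor q = 0 -> frac q = q.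
Proof. by rewrite /frac => ->; rewrite subr0. Qed.

Lemma frac_addl a b : frac (frac a + b) = frac (a + b).
Proof. by rewrite [frac a]/frac addrAC -intrN frac_addz. Qed.

Lemma frac_eq0 q : frac q = 0 <-> q \is a Num.int.
Proof.
rewrite intrEfloor /frac; split; first by move/eqP; rewrite subr_eq0 eq_sym.
by move/eqP->; rewrite subrr.
Qed.

(* Q/Z, represented by the rationals of [0, 1). *)
Record QZ := MkQZ { qz_val : rat; qz_valP : Num.floor qz_val = 0 }.
HB.instance Definition _ := gen_eqMixin QZ.
HB.instance Definition _ := gen_choiceMixin QZ.

Lemma QZ_ext x y : qz_val x = qz_val y -> x = y.
Proof.
case: x y => a Ha [b Hb] /= Eab; subst b.
by rewrite (Prop_irrelevance Ha Hb).
Qed.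

Definition qz_of q := MkQZ (floor_frac q).

Lemma qz_valK x : qz_of (qz_val x) = x.
Proof. by apply: QZ_ext => /=; rewrite frac_id // qz_valP. Qed.

Lemma qz_of_eq a b : qz_of a = qz_of b <-> frac a = frac b.
Proof. by split=> [/(congr1 qz_val)//|E]; apply: QZ_ext. Qed.

Lemma QZ_ind (P : QZ -> Prop) : (forall a, P (qz_of a)) -> forall x, P x.
Proof. by move=> H x; rewrite -(qz_valK x). Qed.

Definition qz_add x y := qz_of (qz_val x + qz_val y).
Definition qz_opp x := qz_of (- qz_val x).

Lemma qz_addE a b : qz_add (qz_of a) (qz_of b) = qz_of (a + b).
Proof. by apply/qz_of_eq => /=; rewrite frac_addl addrC frac_addl addrC. Qed.

Lemma qz_oppE a : qz_opp (qz_of a) = qz_of (- a).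
Proof. by apply/qz_of_eq => /=; rewrite [frac a]/frac opprB addrC frac_addz. Qed.

Lemma qz_addA : associative qz_add.
Proof. by elim/QZ_ind=> a; elim/QZ_ind=> b; elim/QZ_ind=> c; rewrite !qz_addE addrA. Qed.

Lemma qz_addC : commutative qz_add.
Proof. by elim/QZ_ind=> a; elim/QZ_ind=> b; rewrite !qz_addE addrC. Qed.

Lemma qz_add0 : left_id (qz_of 0) qz_add.
Proof. by elim/QZ_ind=> a; rewrite qz_addE add0r. Qed.

Lemma qz_addN : left_inverse (qz_of 0) qz_opp qz_add.
Proof. by elim/QZ_ind=> a; rewrite qz_oppE qz_addE addNr. Qed.

HB.instance Definition _ := GRing.isZmodule.Build QZ qz_addA qz_addC qz_add0 qz_addN.

Lemma qz_of_morph : zmod_morphism qz_of.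
Proof. by move=> a b; rewrite -qz_addE -qz_oppE. Qed.

HB.instance Definition _ := GRing.isZmodMorphism.Build rat QZ qz_of qz_of_morph.

Lemma qz_of_eq0 q : qz_of q = 0 <-> q \is a Num.int.
Proof.
have frac0 : frac 0 = 0 by rewrite /frac floor0 subr0.
rewrite -frac_eq0 -(raddf0 qz_of) qz_of_eq frac0; split=> //.
Qed.

Lemma QZ_divisible (x : QZ) (n : nat) : (0 < n)%N -> exists e : QZ, e *+ n = x.
Proof.
move=> n0; exists (qz_of (qz_val x / n%:R)).
rewrite -raddfMn /= -[X in qz_of X]mulr_natr divfK ?qz_valK //.
by rewrite pnatr_eq0 -lt0n.
Qed.

Lemma qz_of_inv_neq0 (o : nat) : (1 < o)%N -> qz_of (o%:R^-1) <> 0.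
Proof.
move=> o1 /qz_of_eq0; rewrite intrEfloor.
have o0 : (0 : rat) < o%:R by rewrite ltr0n; apply: leq_trans o1.
have -> : Num.floor ((o%:R : rat)^-1) = 0.
  apply: floor_def; rewrite add0r /= invr_ge0 (ltW o0) /= invf_lt1 //.
  by rewrite ltr1n.
by rewrite eq_sym invr_eq0 gt_eqF.
Qed.

Definition is_submod (S : pzRingType) (M : lmodType S) (P : M -> Prop) :=
  P 0 /\ forall a x y, P x -> P y -> P (a *: x + y).

Definition linear_on (S : pzRingType) (M L : lmodType S) (P : M -> Prop)
    (f : M -> L) :=
  forall a x y, P x -> P y -> f (a *: x + y) = a *: f x + f y.

Definition baer (S : pzRingType) (L : lmodType S) :=
  forall (I : S -> Prop) (h : S -> L), I 0 ->
    (forall a b, I a -> I b -> I (a + b)) -> (forall r a, I a -> I (r * a)) ->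
    (forall a b, I a -> I b -> h (a + b) = h a + h b) ->
    (forall r a, I a -> h (r * a) = r *: h a) ->
    exists e, forall a, I a -> h a = a *: e.

Section SubmodFacts.
Variables (S : pzRingType) (M L : lmodType S) (P : M -> Prop) (f : M -> L).
Hypothesis (HP : is_submod P) (Hf : linear_on P f).

Lemma submod0 : P 0. Proof. by case: HP. Qed.

Lemma submodD x y : P x -> P y -> P (x + y).
Proof. by move=> Px Py; have := HP.2 1 x y Px Py; rewrite scale1r. Qed.

Lemma submodZ a x : P x -> P (a *: x).
Proof. by move=> Px; have := HP.2 a x 0 Px submod0; rewrite addr0. Qed.

Lemma submodB x y : P x -> P y -> P (x - y).
Proof. by move=> Px Py; rewrite addrC -scaleN1r; apply: HP.2. Qed.

Lemma linear_on0 : f 0 = 0.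
Proof.
have := Hf 1 submod0 submod0; rewrite !scale1r addr0 => H.
by apply: (addrI (f 0)); rewrite addr0 -H.
Qed.

Lemma linear_onD x y : P x -> P y -> f (x + y) = f x + f y.
Proof. by move=> Px Py; have := Hf 1 Px Py; rewrite !scale1r. Qed.

Lemma linear_onZ a x : P x -> f (a *: x) = a *: f x.
Proof. by move=> Px; have := Hf a Px submod0; rewrite !addr0 linear_on0 addr0. Qed.

Lemma linear_onB x y : P x -> P y -> f (x - y) = f x - f y.
Proof. by move=> Px Py; rewrite [x - y]addrC -scaleN1r Hf // scaleN1r addrC. Qed.
End SubmodFacts.

Section Adjoin.
Variables (S : pzRingType) (M L : lmodType S) (P : M -> Prop) (f : M -> L).
Hypothesis (HP : is_submod P) (Hf : linear_on P f).
Variables (x : M) (e : L).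
Hypothesis He : forall a, P (a *: x) -> f (a *: x) = a *: e.

Definition adjoin (v : M) := exists pa : M * S, P pa.1 /\ v = pa.1 + pa.2 *: x.

Definition adjoin_map (v : M) : L :=
  match pselect (adjoin v) with
  | left H => let pa := proj1_sig (cid H) in f pa.1 + pa.2 *: e
  | right _ => 0 end.

Lemma adjoin_map_wd p a p' a' : P p -> P p' -> p + a *: x = p' + a' *: x ->
  f p + a *: e = f p' + a' *: e.
Proof.
move=> Pp Pp' E.
have Ex : (a - a') *: x = p' - p.
  have Ea : a *: x = p' + a' *: x - p by rewrite -E addrC addKr.
  by rewrite scalerBl Ea addrAC addrK.
have : f ((a - a') *: x) = (a - a') *: e by apply/He; rewrite Ex; apply: (submodB HP).
rewrite Ex (linear_onB Hf) // scalerBl => Efe.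
rewrite (_ : a *: e = f p' - f p + a' *: e); last by rewrite Efe subrK.
by rewrite addrA (addrC (f p)) subrK.
Qed.

Lemma adjoin_mapE p a : P p -> adjoin_map (p + a *: x) = f p + a *: e.
Proof.
move=> Pp; rewrite /adjoin_map; case: pselect => [H|[]]; last by exists (p, a).
by case: (cid H) => [[q b] /= [Pq E]]; apply: adjoin_map_wd => //; rewrite E.
Qed.

Lemma adjoin_submod : is_submod adjoin.
Proof.
split; first by exists (0, 0); rewrite /= scale0r addr0; split=> //; apply: (submod0 HP).
move=> b v w [[p a] /= [Pp ->]] [[q c] /= [Pq ->]].
exists (b *: p + q, b * a + c) => /=; split; first by apply HP.
by rewrite scalerDr scalerDl scalerA addrACA.
Qed.

Lemma adjoin_linear_on : linear_on adjoin adjoin_map.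
Proof.
move=> b v w [[p a] /= [Pp ->]] [[q c] /= [Pq ->]].
have -> : b *: (p + a *: x) + (q + c *: x) = (b *: p + q) + (b * a + c) *: x.
  by rewrite scalerDr scalerDl scalerA addrACA.
rewrite !adjoin_mapE //; last by apply HP.
by rewrite Hf // scalerDr scalerDl scalerA addrACA.
Qed.

Lemma adjoin_extends v : P v -> adjoin v /\ adjoin_map v = f v.
Proof.
move=> Pv; have E : v = v + 0 *: x by rewrite scale0r addr0.
by split; [exists (v, 0) | rewrite {1}E adjoin_mapE // scale0r addr0].
Qed.

Lemma adjoin_at_x : adjoin x /\ adjoin_map x = e.
Proof.
have E : x = 0 + 1 *: x by rewrite scale1r add0r.
split; first by exists (0, 1); split => //; apply: (submod0 HP).
rewrite {1}E adjoin_mapE; last exact: (submod0 HP).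
by rewrite (linear_on0 HP Hf) scale1r add0r.
Qed.
End Adjoin.

Section ZornExtension.
Variables (S : pzRingType) (M L : lmodType S) (P0 : M -> Prop) (f0 : M -> L).
Hypothesis (HP0 : is_submod P0) (Hf0 : linear_on P0 f0).

Definition extends (p q : (M -> Prop) * (M -> L)) :=
  (forall v, p.1 v -> q.1 v) /\ (forall v, p.1 v -> q.2 v = p.2 v).

Lemma extends_refl p : extends p p. Proof. by []. Qed.

Lemma extends_trans p q r : extends p q -> extends q r -> extends p r.
Proof.
move=> [pq1 pq2] [qr1 qr2]; split=> v pv; first by apply/qr1/pq1.
by rewrite qr2 ?pq2 //; apply: pq1.
Qed.

Definition admissible (p : (M -> Prop) * (M -> L)) :=
  [/\ is_submod p.1, linear_on p.1 p.2 & extends (P0, f0) p].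

Definition partial_ext := {p | admissible p}.

Definition ext_rel : rel partial_ext :=
  fun s t => asbool (extends (proj1_sig s) (proj1_sig t)).

Section ChainUnion.
Variable A : set partial_ext.
Hypothesis Atot : total_on A ext_rel.
Variable s0 : partial_ext.
Hypothesis As0 : A s0.

Definition union_dom (v : M) := exists s, A s /\ (proj1_sig s).1 v.

Definition union_map (v : M) : L :=
  match pselect (union_dom v) with
  | left H => (proj1_sig (proj1_sig (cid H))).2 v
  | right _ => 0 end.

Lemma chain_total s t : A s -> A t ->
  extends (proj1_sig s) (proj1_sig t) \/ extends (proj1_sig t) (proj1_sig s).
Proof. by move=> As At; case: (Atot As At) => /asboolP; [left|right]. Qed.

Lemma union_mapE s v : A s -> (proj1_sig s).1 v -> union_map v = (proj1_sig s).2 v.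
Proof.
move=> As sv; rewrite /union_map; case: pselect => [H|[]]; last by exists s.
case: (cid H) => t [At tv] /=.
by case: (chain_total As At) => [[_ ->]|[_ ->]].
Qed.

Lemma union_dom2 v w : union_dom v -> union_dom w ->
  exists s, [/\ A s, (proj1_sig s).1 v & (proj1_sig s).1 w].
Proof.
move=> [s [As sv]] [t [At tw]].
case: (chain_total As At) => [[st _]|[ts _]]; first by exists t; split=> //; apply: st.
by exists s; split=> //; apply: ts.
Qed.

Lemma union_admissible : admissible (union_dom, union_map).
Proof.
have [[HPs0 _] _ [s0P s0f]] := proj2_sig s0.
split => /=.
- split; first by exists s0; split=> //; apply: (submod0 HPs0).
  move=> a v w Uv Uw; have [s [As sv sw]] := union_dom2 Uv Uw.
  by exists s; split=> //; have [[_ H] _ _] := proj2_sig s; apply: H.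
- move=> a v w Uv Uw; have [s [As sv sw]] := union_dom2 Uv Uw.
  have [[_ Hs] Hl _] := proj2_sig s.
  by rewrite !(union_mapE As) //; [apply: Hl | apply: Hs].
- split=> /= v P0v; first by exists s0; split=> //; apply: s0P.
  by rewrite (union_mapE As0) ?s0f //; apply: s0P.
Qed.

Lemma union_upper s : A s -> extends (proj1_sig s) (union_dom, union_map).
Proof. by move=> As; split=> v sv /=; [exists s | rewrite (union_mapE As)]. Qed.
End ChainUnion.

Hypothesis enlarge : forall P f x, is_submod P -> linear_on P f -> ~ P x ->
  exists P' f', [/\ is_submod P', linear_on P' f', extends (P, f) (P', f') & P' x].

Lemma zorn_extension : exists f : M -> L,
  (forall a x y, f (a *: x + y) = a *: f x + f y) /\ (forall v, P0 v -> f v = f0 v).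
Proof.
pose t0 : partial_ext := exist _ (P0, f0) (And3 HP0 Hf0 (extends_refl _)).
have chain_ub A : total_on A ext_rel -> exists t, forall s, A s -> ext_rel s t.
  have [[s0 As0] Atot|nA _] := pselect (exists s, A s).
    exists (exist _ _ (union_admissible Atot As0)) => s As.
    by apply: asboolT; apply: union_upper.
  by exists t0 => s As; case: nA; exists s.
have [t tmax] := @ZL_preorder partial_ext t0 ext_rel
  (fun t => asboolT (extends_refl _))
  (fun r s t rs st => asboolT (extends_trans (asboolW rs) (asboolW st))) chain_ub.
case: t tmax => [[P f] [HP Hf Hext]] tmax.
have allP x : P x.
  apply: contrapT => nPx.
  have [P' [f' [HP' Hf' E' P'x]]] := enlarge HP Hf nPx.
  have ad : admissible (P', f') by split=> //; apply: extends_trans Hext E'.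
  have /asboolW [/= PP' _] := tmax (exist _ (P', f') ad) (asboolT E').
  exact/nPx/PP'.
exists f; split; first by move=> a x y; exact: (Hf a x y (allP x) (allP y)).
by move=> v P0v; apply: Hext.2.
Qed.
End ZornExtension.

Lemma baer_extension (S : pzRingType) (M L : lmodType S) (HL : baer L)
  (P0 : M -> Prop) (f0 : M -> L) : is_submod P0 -> linear_on P0 f0 ->
  exists f : M -> L,
  (forall a x y, f (a *: x + y) = a *: f x + f y) /\ (forall v, P0 v -> f v = f0 v).
Proof.
move=> HP0 Hf0; apply: zorn_extension => // P f x HP Hf nPx.
have [e He] : exists e, forall a, P (a *: x) -> f (a *: x) = a *: e.
  apply: (HL (fun a => P (a *: x)) (fun a => f (a *: x))).
  - by rewrite scale0r; apply: (submod0 HP).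
  - by move=> a b Pa Pb; rewrite scalerDl; apply: (submodD HP).
  - by move=> r a Pa; rewrite -scalerA; apply: (submodZ HP).
  - by move=> a b Pa Pb; rewrite scalerDl (linear_onD Hf).
  - by move=> r a Pa; rewrite -scalerA (linear_onZ HP Hf).
exists (adjoin P x), (adjoin_map P f x e); split.
- exact: adjoin_submod.
- exact: adjoin_linear_on.
- by split=> v Pv; have [] := adjoin_extends HP Hf He Pv.
- by have [] := adjoin_at_x HP Hf He.
Qed.

Section LinearOf.
Variables (S : pzRingType) (M L : lmodType S) (f : M -> L).
Hypothesis fL : forall a x y, f (a *: x + y) = a *: f x + f y.
Definition linear_fun : M -> L := f.
HB.instance Definition _ := GRing.isLinear.Build S M L *:%R linear_fun fL.
Definition linear_of : {linear M -> L} := linear_fun.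
Lemma linear_ofE x : linear_of x = f x. Proof. by []. Qed.
End LinearOf.

Lemma additive_mulrz (U V : zmodType) (f : U -> V) :
  (forall x y, f (x + y) = f x + f y) -> forall x k, f (x *~ k) = f x *~ k.
Proof.
move=> fD.
have f0 : f 0 = 0 by apply: (addrI (f 0)); rewrite -fD !addr0.
have fN x : f (- x) = - f x by apply: (addrI (f x)); rewrite -fD !subrr.
have fn x n : f (x *+ n) = f x *+ n.
  by elim: n => [|n IH]; rewrite ?mulr0n // !mulrS fD IH.
move=> x [] n; first by rewrite -!pmulrn fn.
by rewrite !NegzE !mulrNz -!pmulrn fN fn.
Qed.

Section IntModule.
Variable V : zmodType.
Definition zmod_int : Type := V.
HB.instance Definition _ := GRing.Zmodule.on zmod_int.
Let zscale (k : int) (v : zmod_int) : zmod_int := v *~ k.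
Let zscaleA a b v : zscale a (zscale b v) = zscale (a * b) v.
Proof. by rewrite /zscale mulrzA_C. Qed.
Let zscale1 : left_id 1 zscale. Proof. by []. Qed.
Let zscaleDr : right_distributive zscale +%R.
Proof. by move=> a u v; rewrite /zscale mulrzDl. Qed.
Let zscaleDl v : {morph zscale^~ v : a b / a + b}.
Proof. by move=> a b; rewrite /zscale mulrzDr. Qed.
HB.instance Definition _ :=
  GRing.Zmodule_isLmodule.Build int zmod_int zscaleA zscale1 zscaleDr zscaleDl.
Lemma zmod_intZ (k : int) (v : zmod_int) : k *: v = (v : V) *~ k. Proof. by []. Qed.
End IntModule.

(* Every ideal of Z is 0 or generated by its least positive element. *)
Lemma int_ideal_principal (I : int -> Prop) : I 0 ->
  (forall a b, I a -> I b -> I (a + b)) -> (forall r a, I a -> I (r * a)) ->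
  (forall k, I k -> k = 0) \/
  exists o : nat, [/\ (0 < o)%N, I o%:Z & forall k, I k -> exists q, k = q * o%:Z].
Proof.
move=> I0 ID IM.
have [[k [Ik k0]]|] := pselect (exists k, I k /\ k <> 0); last first.
  by move=> H; left=> k Ik; apply: contrapT => k0; apply: H; exists k.
right.
have Iabs : I (`|k|%N)%:Z.
  by rewrite abszE; case: (ger0P k) => _; [rewrite -(mul1r k) | rewrite -mulN1r];
    apply: IM.
have ex : exists n, (0 < n)%N && `[< I n%:Z >].
  by exists `|k|%N; rewrite absz_gt0 asboolT // andbT; apply/eqP.
case: (ex_minnP ex) => o /andP [o0 /asboolW Io] omin.
exists o; split=> // m Im; exists (m %/ o)%Z.
have o0' : o%:Z != 0 by rewrite eqz_nat -lt0n.
have Imod : I (m %% o)%Z.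
  rewrite (_ : (m %% o)%Z = m + (- (m %/ o)%Z) * o%:Z); first by apply: ID => //; apply: IM.
  by rewrite {2}(divz_eq m o) mulNr addrC addKr.
have := modz_ge0 m o0'; have := ltz_mod m o0'.
case E: (m %% o)%Z Imod => [[|n]|//] In no _; first by rewrite {1}(divz_eq m o) E addr0.
have := omin n.+1; rewrite /= asboolT // => /(_ isT).
by rewrite leqNgt; case/negP.
Qed.

Lemma divisible_baer (L : zmodType) :
  (forall (x : L) (n : nat), (0 < n)%N -> exists e, e *+ n = x) -> baer (zmod_int L).
Proof.
move=> div I h I0 ID IM hD hM.
have h0 : h 0 = 0 by apply: (addrI (h 0)); rewrite -hD // !addr0.
case: (int_ideal_principal I0 ID IM) => [I00|[o [o0 Io oI]]].
  by exists 0 => a Ia; rewrite (I00 a Ia) h0 scaler0.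
have [e He] := div (h o%:Z) o o0.
exists e => a Ia; have [q ->] := oI a Ia.
by rewrite hM // !zmod_intZ -He -mulrz_nat mulrzA_C natz.
Qed.

Lemma QZ_baer : baer (zmod_int QZ).
Proof. exact: divisible_baer QZ_divisible. Qed.

Lemma fun_baer (T : Type) (L : zmodType) :
  baer (zmod_int L) -> baer (zmod_int (T -> L)).
Proof.
move=> HL I h I0 ID IM hD hM.
have evalD t : forall f g : T -> L, (f + g) t = f t + g t by [].
have Ht t : exists e : L, forall a, I a -> h a t = a *: (e : zmod_int L).
  apply: (HL I (fun a => h a t)) => // [a b Ia Ib|r a Ia]; first by rewrite hD.
  by rewrite hM // !zmod_intZ (additive_mulrz (evalD t)).
exists (fun t => proj1_sig (cid (Ht t))) => a Ia; apply/funext => t.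
rewrite zmod_intZ (additive_mulrz (evalD t)) -zmod_intZ.
by case: (cid (Ht t)) => e /= ->.
Qed.

Lemma subgroup_submod (V : zmodType) (W : V -> Prop) :
  W 0 -> (forall x y, W x -> W y -> W (x - y)) -> is_submod (W : zmod_int V -> Prop).
Proof.
move=> W0 WB.
have WN x : W x -> W (- x) by move=> Wx; rewrite -sub0r; apply: WB.
have WD x y : W x -> W y -> W (x + y).
  by move=> Wx Wy; rewrite -(opprK y); apply/WB/WN.
have Wn x n : W x -> W (x *+ n).
  by move=> Wx; elim: n => [|n IH]; rewrite ?mulr0n // mulrS; apply: WD.
split=> // a x y Wx Wy; rewrite zmod_intZ; apply: WD => //.
case: a => n; first by rewrite -pmulrn; apply: Wn.
by rewrite NegzE mulrNz -pmulrn; apply/WN/Wn.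
Qed.

Lemma cyclic_character (V : zmodType) (W : V -> Prop) (v : V) :
  is_submod (W : zmod_int V -> Prop) -> ~ W v ->
  exists d : QZ, d <> 0 /\ forall a : int, W (v *~ a) -> d *~ a = 0.
Proof.
move=> HW nWv.
have := @int_ideal_principal (fun a => W (v *~ a)).
case.
- by rewrite mulr0z; apply: (submod0 HW).
- by move=> a b Ia Ib; rewrite mulrzDr; apply: (submodD HW).
- by move=> r a Ia; rewrite -mulrzA_C -zmod_intZ; apply: (submodZ HW).
- move=> I0; exists (qz_of 2%:R^-1); split; first exact: qz_of_inv_neq0.
  by move=> a /I0 ->; rewrite mulr0z.
move=> [o [o0 Io oI]].
have o1 : (1 < o)%N by case: o o0 Io {oI} => [|[|o]] // _; rewrite mulr1z => /nWv.
exists (qz_of o%:R^-1); split; first exact: qz_of_inv_neq0.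
move=> a /oI [q ->]; rewrite -raddfMz /=; apply/qz_of_eq0.
rewrite -mulrzr (_ : (q * o%:Z)%:~R = q%:~R * (o%:R : rat)) ?intrM //.
by rewrite mulrCA mulVf ?mulr1 ?intr_int // pnatr_eq0 -lt0n.
Qed.

Lemma QZ_cogenerator (V : zmodType) (W : V -> Prop) :
  W 0 -> (forall x y, W x -> W y -> W (x - y)) -> forall v, ~ W v ->
  exists chi : V -> QZ, [/\ forall x y, chi (x + y) = chi x + chi y,
    forall w, W w -> chi w = 0 & chi v <> 0].
Proof.
move=> W0 WB v nWv.
have HW := subgroup_submod W0 WB.
have [d [d0 dI]] := cyclic_character HW nWv.
pose zero_map := fun _ : zmod_int V => 0 : zmod_int QZ.
have Hzero : linear_on (W : zmod_int V -> Prop) zero_map.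
  by move=> a x y _ _; rewrite scaler0 addr0.
have He a : W (a *: (v : zmod_int V)) -> zero_map (a *: (v : zmod_int V)) = a *: (d : zmod_int QZ).
  by rewrite !zmod_intZ => /dI ->.
have [f [fL fE]] :=
  baer_extension QZ_baer (adjoin_submod HW (v : zmod_int V)) (adjoin_linear_on HW Hzero He).
exists f; split.
- by move=> x y; have := fL 1 x y; rewrite !scale1r.
- by move=> w Ww; have [Aw Ew] := adjoin_extends HW Hzero He Ww; rewrite fE.
- by have [Av Ev] := adjoin_at_x HW Hzero He; rewrite fE // Ev.
Qed.

(* The coinduced module: for a module V and a subgroup W, let T be the set of
   characters of V vanishing on W; the left R-module Hom_Z(R, (Q/Z)^T), with
   (r f)(s) = f (s r), is injective and contains V / W. *)
Section Coinduced.
Variables (R : pzRingType) (V : lmodType R) (W : V -> Prop).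

Record killing_char := KillingChar { kchar : V -> QZ;
  kcharD : forall x y, kchar (x + y) = kchar x + kchar y;
  kcharW : forall w, W w -> kchar w = 0 }.

Definition char_fun := killing_char -> QZ.

Record coind := Coind { coind_fun : R -> char_fun;
  coind_funD : forall s s', coind_fun (s + s') = coind_fun s + coind_fun s' }.
HB.instance Definition _ := gen_eqMixin coind.
HB.instance Definition _ := gen_choiceMixin coind.

Lemma coind_ext (a b : coind) : coind_fun a = coind_fun b -> a = b.
Proof.
case: a b => fa Ha [fb Hb] /= E; subst fb.
by rewrite (Prop_irrelevance Ha Hb).
Qed.

Definition coind_zero := @Coind (fun _ => 0) (fun _ _ => esym (addr0 0)).

Let coind_addD (a b : coind) s s' :
  (fun s => coind_fun a s + coind_fun b s) (s + s') =
  (fun s => coind_fun a s + coind_fun b s) s + (fun s => coind_fun a s + coind_fun b s) s'.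
Proof. by rewrite /= !coind_funD addrACA. Qed.
Definition coind_add (a b : coind) := Coind (coind_addD a b).

Let coind_oppD (a : coind) s s' :
  (fun s => - coind_fun a s) (s + s') = (fun s => - coind_fun a s) s + (fun s => - coind_fun a s) s'.
Proof. by rewrite /= coind_funD opprD. Qed.
Definition coind_opp (a : coind) := Coind (coind_oppD a).

Let coind_addA : associative coind_add.
Proof. by move=> a b c; apply: coind_ext; apply/funext => s /=; rewrite addrA. Qed.
Let coind_addC : commutative coind_add.
Proof. by move=> a b; apply: coind_ext; apply/funext => s /=; rewrite addrC. Qed.
Let coind_add0 : left_id coind_zero coind_add.
Proof. by move=> a; apply: coind_ext; apply/funext => s /=; rewrite add0r. Qed.
Let coind_addN : left_inverse coind_zero coind_opp coind_add.
Proof. by move=> a; apply: coind_ext; apply/funext => s /=; rewrite addNr. Qed.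
HB.instance Definition _ :=
  GRing.isZmodule.Build coind coind_addA coind_addC coind_add0 coind_addN.

Let coind_scaleD (r : R) (a : coind) s s' :
  (fun s => coind_fun a (s * r)) (s + s') =
  (fun s => coind_fun a (s * r)) s + (fun s => coind_fun a (s * r)) s'.
Proof. by rewrite /= mulrDl coind_funD. Qed.
Definition coind_scale (r : R) (a : coind) := Coind (coind_scaleD r a).

Let coind_scaleA a b v : coind_scale a (coind_scale b v) = coind_scale (a * b) v.
Proof. by apply: coind_ext; apply/funext => s /=; rewrite mulrA. Qed.
Let coind_scale1 : left_id 1 coind_scale.
Proof. by move=> v; apply: coind_ext; apply/funext => s /=; rewrite mulr1. Qed.
Let coind_scaleDr : right_distributive coind_scale +%R.
Proof. by move=> a u v; apply: coind_ext. Qed.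
Let coind_scaleDl v : {morph coind_scale^~ v : a b / a + b}.
Proof.
by move=> a b; apply: coind_ext; apply/funext => s /=; rewrite mulrDr coind_funD.
Qed.
HB.instance Definition _ := GRing.Zmodule_isLmodule.Build R coind
  coind_scaleA coind_scale1 coind_scaleDr coind_scaleDl.

Lemma coind_fun_add (a b : coind) s : coind_fun (a + b) s = coind_fun a s + coind_fun b s.
Proof. by []. Qed.

Lemma coind_funZ r (a : coind) s : coind_fun (r *: a) s = coind_fun a (s * r).
Proof. by []. Qed.

Lemma coind_fun_mulrz (a : coind) k s : coind_fun (a *~ k) s = coind_fun a s *~ k.
Proof. exact: (additive_mulrz (f := fun a : coind => coind_fun a s)). Qed.

(* Injectivity: a partial R-linear map into the coinduced module extends,
   by extending its Z-linear evaluation at 1 into the divisible group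
   (Q/Z)^T and coinducing back. *)
Lemma coind_extension (M : lmodType R) (P0 : M -> Prop) (g : M -> coind) :
  is_submod P0 -> linear_on P0 g -> exists f : M -> coind,
  (forall a x y, f (a *: x + y) = a *: f x + f y) /\ (forall v, P0 v -> f v = g v).
Proof.
move=> HP Hg.
pose g1 := fun v : zmod_int M => (coind_fun (g v) 1 : zmod_int char_fun).
have HPz : is_submod (P0 : zmod_int M -> Prop).
  by apply: subgroup_submod; [exact: (submod0 HP) | move=> x y; apply: (submodB HP)].
have Hg1 : linear_on (P0 : zmod_int M -> Prop) g1.
  move=> k x y Px Py; rewrite /g1 !zmod_intZ -!scaler_int (Hg _ _ _ Px Py).
  by rewrite coind_fun_add scaler_int coind_fun_mulrz.
have [G [GL GE]] := baer_extension (fun_baer QZ_baer) HPz Hg1.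
have GD x y : G (x + y) = G x + G y by have := GL 1 x y; rewrite !scale1r.
have fD (v : M) s s' : (fun s => G (s *: v) : char_fun) (s + s') =
    (fun s => G (s *: v) : char_fun) s + (fun s => G (s *: v) : char_fun) s'.
  by rewrite /= scalerDl GD.
exists (fun v => Coind (fD v)); split.
  by move=> a x y; apply: coind_ext; apply/funext => s /=; rewrite scalerDr scalerA GD.
move=> v Pv; apply: coind_ext; apply/funext => s /=.
rewrite GE; last exact: (submodZ HP).
by rewrite /g1 (linear_onZ HP Hg) // coind_funZ mul1r.
Qed.

(* Being injective, the coinduced module is absolutely pure: a pp formula
   solved in an extension is solved after retracting onto coind. *)
Lemma coind_abs_pure : abs_pure coind.
Proof.
move=> N e einj n phi x [y Hy].
pose P0 := fun z : N => exists a : coind, z = e a.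
pose retract := fun z : N => match pselect (P0 z) with
  | left H => proj1_sig (cid H) | right _ => 0 end.
have retractE a : retract (e a) = a.
  rewrite /retract; case: pselect => [H|[]]; last by exists a.
  by case: (cid H) => b /= /einj.
have HP : is_submod P0.
  split; first by exists 0; rewrite linear0.
  by move=> a _ _ [u ->] [w ->]; exists (a *: u + w); rewrite linearP.
have Hr : linear_on P0 retract by move=> a _ _ [u ->] [w ->]; rewrite -linearP !retractE.
have [f [fL fE]] := coind_extension HP Hr.
pose F := linear_of fL.
have FeE j : F (e (x j)) = x j by rewrite linear_ofE fE ?retractE //; exists (x j).
exists (fun l => F (y l)) => i.
have := congr1 F (Hy i); rewrite linear0 linearD !linear_sum => E.
by apply: eq_trans E; congr (_ + _); apply: eq_bigr => j _; rewrite linearZ //= FeE.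
Qed.

Let embD (v : V) s s' :
  (fun s => (fun t : killing_char => kchar t (s *: v)) : char_fun) (s + s') =
  (fun s => (fun t : killing_char => kchar t (s *: v)) : char_fun) s +
  (fun s => (fun t : killing_char => kchar t (s *: v)) : char_fun) s'.
Proof. by apply/funext => t /=; rewrite scalerDl kcharD. Qed.
Definition coind_emb_fun (v : V) : coind := Coind (embD v).

Lemma coind_emb_funP a x y :
  coind_emb_fun (a *: x + y) = a *: coind_emb_fun x + coind_emb_fun y.
Proof.
apply: coind_ext; apply/funext => s; apply/funext => t /=.
by rewrite scalerDr scalerA kcharD.
Qed.

Definition coind_emb : {linear V -> coind} := linear_of coind_emb_funP.

Lemma coind_embE v s t : coind_fun (coind_emb v) s t = kchar t (s *: v).
Proof. by []. Qed.

Lemma coind_emb_ker (HW : is_submod W) v : coind_emb v = 0 -> W v.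
Proof.
move=> ev0; apply: contrapT => nWv.
have [chi [chiD chiW chiv]] := QZ_cogenerator (submod0 HW) (submodB HW) nWv.
apply: chiv; have := congr1 (fun a => coind_fun a 1 (KillingChar chiD chiW)) ev0.
by rewrite coind_embE scale1r.
Qed.

Lemma coind_emb_vanish (HW : is_submod W) v : W v -> coind_emb v = 0.
Proof.
move=> Wv; apply: coind_ext; apply/funext => s; apply/funext => t /=.
by rewrite kcharW //; apply: (submodZ HW).
Qed.
End Coinduced.

Lemma delta_sum (R : pzRingType) (V : lmodType R) n (x : 'I_n -> V) i :
  \sum_j (i == j)%:R *: x j = x i.
Proof.
rewrite (bigD1 i) //= eqxx scale1r big1 ?addr0 // => j /negbTE.
by rewrite eq_sym => ->; rewrite scale0r.
Qed.

Definition multiple_formula (R : pzRingType) n (g : 'I_n -> R) : ppf R n :=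
  @PPF R n 1 n (fun i j => (i == j)%:R) (fun i _ => - g i).

Lemma multiple_formulaP (R : pzRingType) (M : lmodType R) n (g : 'I_n -> R)
    (x : 'I_n -> M) :
  pp_holds (multiple_formula g) x <-> exists y, forall i, x i = g i *: y.
Proof.
split=> [[y Hy]|[y Hy]].
  exists (y ord0) => i; have /eqP := Hy i.
  by rewrite /= delta_sum big_ord1 scaleNr subr_eq0 => /eqP.
by exists (fun _ => y) => i; rewrite /= delta_sum big_ord1 Hy scaleNr subrr.
Qed.

Definition relations_formula (R : pzRingType) n p (G : 'I_p -> 'I_n -> R) : ppf R n :=
  @PPF R n 0 p G (fun _ _ => 0).

Lemma relations_formulaP (R : pzRingType) (M : lmodType R) n p
    (G : 'I_p -> 'I_n -> R) (x : 'I_n -> M) :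
  pp_holds (relations_formula G) x <-> forall i, \sum_j G i j *: x j = 0.
Proof.
split=> [[y Hy] i|Hx]; first by have := Hy i; rewrite /= big_ord0 addr0.
by exists (fun _ => 0) => i; rewrite /= big_ord0 addr0.
Qed.

Lemma zero_submod (R : pzRingType) (V : lmodType R) : is_submod (fun v : V => v = 0).
Proof. by split=> // a x y -> ->; rewrite scaler0 addr0. Qed.

Lemma coind_emb0_inj (R : pzRingType) (V : lmodType R) :
  injective (coind_emb (fun v : V => v = 0)).
Proof.
move=> v w E; apply/eqP; rewrite -subr_eq0; apply/eqP.
by apply: (coind_emb_ker (zero_submod V)); rewrite linearB /= E subrr.
Qed.

Lemma ideal_comb (R : pzRingType) (L : lmodType R) (I : R -> Prop) (h : R -> L) :
  left_ideal I -> (forall a b, I a -> I b -> h (a + b) = h a + h b) -> h 0 = 0 ->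
  (forall r a, I a -> h (r * a) = r *: h a) ->
  forall n (c g : 'I_n -> R), (forall i, I (g i)) ->
  I (\sum_i c i * g i) /\ h (\sum_i c i * g i) = \sum_i c i *: h (g i).
Proof.
move=> [I0 ID IM] hD h0 hM n c g Ig.
apply: (big_rec2 (fun s t => I s /\ h s = t)) => // i s t _ [Is <-].
by split; [apply: ID => //; apply: IM | rewrite hD ?hM //; apply: IM].
Qed.

(* Over a left noetherian ring, absolutely pure modules satisfy Baer's
   condition: embed L into the injective coinduced module, extend there, and
   pull the solution of the resulting system x_i = g_i y back to L by purity. *)
Lemma noetherian_baer (R : pzRingType) (L : lmodType R) :
  left_noetherian R -> abs_pure L -> baer L.
Proof.
move=> HR HL I h I0 ID IM hD hM.
have h0 : h 0 = 0 by apply: (addrI (h 0)); rewrite -hD // !addr0.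
have Iid : left_ideal I by [].
pose io := coind_emb (fun v : L => v = 0).
have [n [g [Ig Igen]]] := HR I Iid.
have HI : is_submod (I : R^o -> Prop).
  by split=> // a x y Ix Iy; apply: ID => //; apply: IM.
have Hio : linear_on (I : R^o -> Prop) (fun a => io (h a)).
  move=> a x y Ix Iy /=; have Iax : I (a * x) by apply: IM.
  by rewrite hD // hM //; exact: (linearP io).
have [F [FL FE]] := coind_extension HI Hio.
have F0 : F 0 = 0 by rewrite FE // h0 linear0.
have FI a : I a -> io (h a) = a *: F 1.
  move=> Ia; have := FL a 1 0; rewrite F0 !addr0 => <-.
  by rewrite -FE //; congr F; exact: (esym (mulr1 a)).
have /(HL _ io (@coind_emb0_inj _ L)) : pp_holds (multiple_formula g) (fun j => io (h (g j))).
  by apply/multiple_formulaP; exists (F 1) => i; apply: FI.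
move/multiple_formulaP => [y Hy]; exists y => a /Igen [c ->].
have [_ ->] := ideal_comb Iid hD h0 hM c Ig.
by rewrite scaler_suml; apply: eq_bigr => i _; rewrite Hy scalerA.
Qed.

Definition vec_submod (R : pzRingType) n (K : ('I_n -> R) -> Prop) :=
  K (fun _ => 0) /\ forall a r r', K r -> K r' -> K (fun j => a * r j + r' j).

Definition vec_fg (R : pzRingType) n (K : ('I_n -> R) -> Prop) :=
  exists p (G : 'I_p -> 'I_n -> R), (forall i, K (G i)) /\
    forall r, K r -> exists c : 'I_p -> R, forall j, r j = \sum_i c i * G i j.

Lemma vec_comb (R : pzRingType) n (K : ('I_n -> R) -> Prop) p
    (w : 'I_p -> 'I_n -> R) (d : 'I_p -> R) :
  vec_submod K -> (forall i, K (w i)) -> K (fun j => \sum_i d i * w i j).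
Proof.
move=> [K0 KC] Kw; rewrite /(\sum_i _) /=.
elim: (index_enum _) => [|i l IHl]; first by under eq_fun do rewrite big_nil.
by under eq_fun do rewrite big_cons; apply: KC.
Qed.

Lemma vec_fg_cat (R : pzRingType) n (K : ('I_n -> R) -> Prop) p q
    (G1 : 'I_p -> 'I_n -> R) (G2 : 'I_q -> 'I_n -> R) :
  (forall i, K (G1 i)) -> (forall i, K (G2 i)) ->
  (forall r, K r -> exists c1 c2, forall j,
     r j = \sum_i c1 i * G1 i j + \sum_i c2 i * G2 i j) -> vec_fg K.
Proof.
move=> KG1 KG2 dec.
exists (p + q)%N, (fun i => match fintype.split i with inl a => G1 a | inr b => G2 b end).
split=> [i|r /dec [c1 [c2 Hr]]]; first by case: fintype.split.
exists (fun i => match fintype.split i with inl a => c1 a | inr b => c2 b end) => j.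
rewrite big_split_ord Hr /=; congr (_ + _); apply: eq_bigr => i _.
  by rewrite (@unsplitK p q (inl i)).
by rewrite (@unsplitK p q (inr i)).
Qed.

Definition shift0 (R : pzRingType) n (s : 'I_n -> R) : 'I_n.+1 -> R :=
  fun j => if unlift ord0 j is Some j' then s j' else 0.

Lemma shift0_submod (R : pzRingType) n (K : ('I_n.+1 -> R) -> Prop) :
  vec_submod K -> vec_submod (fun s : 'I_n -> R => K (shift0 s)).
Proof.
move=> [K0 KC]; split.
  by rewrite (_ : shift0 _ = fun _ => 0) //; apply/funext => j; rewrite /shift0; case: unliftP.
move=> a r r' Kr Kr'; rewrite (_ : shift0 _ = fun j => a * shift0 r j + shift0 r' j).
  exact: KC.
by apply/funext => j; rewrite /shift0; case: unliftP => // _; rewrite mulr0 addr0.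
Qed.

(* Over a left noetherian ring, submodules of R^n are finitely generated:
   the first coordinates form a left ideal, generated by the first coordinates
   of some w_i in K; subtracting the corresponding combination of the w_i
   leaves a vector with first coordinate 0, handled by induction. *)
Lemma noetherian_vec_fg (R : pzRingType) n (K : ('I_n -> R) -> Prop) :
  left_noetherian R -> vec_submod K -> vec_fg K.
Proof.
move=> HR; elim: n K => [|n IH] K HK.
  exists 0%N, (fun _ _ => 0); split; first by case.
  by move=> r _; exists (fun _ => 0); case.
have [K0 KC] := HK.
have KM a r : K r -> K (fun j => a * r j).
  by move=> Kr; have := KC a r _ Kr K0; under eq_fun do rewrite addr0.
pose I := fun a => exists r, K r /\ r ord0 = a.
have Iid : left_ideal I.
  split; first by exists (fun _ => 0).
    move=> _ _ [r [Kr <-]] [r' [Kr' <-]]; exists (fun j => r j + r' j); split=> //.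
    by have := KC 1 r r' Kr Kr'; under eq_fun do rewrite mul1r.
  by move=> a _ [r [Kr <-]]; exists (fun j => a * r j); split=> //; apply: KM.
have [q [g [Ig Igen]]] := HR I Iid.
have [w Kw w0] : exists2 w : 'I_q -> 'I_n.+1 -> R, forall i, K (w i) &
    forall i, w i ord0 = g i.
  exists (fun i => proj1_sig (cid (Ig i))) => i; by case: (cid _) => r [].
have [p [G' [KG' Gen']]] := IH _ (shift0_submod HK).
apply: (vec_fg_cat Kw KG') => r Kr.
have [c Hc] : exists c : 'I_q -> R, r ord0 = \sum_i c i * g i by apply/Igen; exists r.
pose s j := r j - \sum_i c i * w i j.
have Ks : K s.
  by have := KC (-1) _ r (vec_comb c HK Kw) Kr; under eq_fun do rewrite mulN1r addrC.
have s0 : s ord0 = 0.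
  by rewrite /s Hc (eq_bigr _ (fun i _ => congr1 (fun x => c i * x) (w0 i))) subrr.
have Ks' : K (shift0 (fun j => s (lift ord0 j))).
  rewrite (_ : shift0 _ = s) //.
  by apply/funext => j; rewrite /shift0; case: unliftP => [j' ->|->].
have [d Hd] := Gen' _ Ks'.
exists c, d => j; rewrite -[r j](subrK (\sum_i c i * w i j)) -/(s j) addrC.
congr (_ + _); case: (unliftP ord0 j) => [j' ->|->].
  by rewrite Hd; apply: eq_bigr => b _; rewrite /shift0 liftK.
by rewrite s0 big1 // => b _; rewrite /shift0 unlift_none mulr0.
Qed.

Lemma tuple_hom_extension (R : pzRingType) (M L : lmodType R) n
    (m : 'I_n -> M) (c : 'I_n -> L) : baer L ->
  (forall r : 'I_n -> R, \sum_j r j *: m j = 0 -> \sum_j r j *: c j = 0) ->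
  exists f : {linear M -> L}, forall j, f (m j) = c j.
Proof.
move=> HL Hrel.
have wd r r' : \sum_j r j *: m j = \sum_j r' j *: m j ->
    \sum_j r j *: c j = \sum_j r' j *: c j.
  move=> E; apply/eqP; rewrite -subr_eq0 -sumrB; apply/eqP.
  under eq_bigr do rewrite -scalerBl; apply: Hrel.
  by under eq_bigr do rewrite scalerBl; rewrite sumrB E subrr.
have comb a r r' (V : lmodType R) (x : 'I_n -> V) :
    a *: (\sum_j r j *: x j) + \sum_j r' j *: x j = \sum_j (a * r j + r' j) *: x j.
  by rewrite scaler_sumr -big_split; apply: eq_bigr => j _; rewrite scalerDl scalerA.
pose span := fun v : M => exists r, v = \sum_j r j *: m j.
pose g := fun v : M => match pselect (span v) with
  | left H => \sum_j (proj1_sig (cid H)) j *: c j | right _ => 0 end.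
have gE r : g (\sum_j r j *: m j) = \sum_j r j *: c j.
  rewrite /g; case: pselect => [H|[]]; last by exists r.
  by case: (cid H) => r' /= E; apply: wd; rewrite -E.
have Hspan : is_submod span.
  split; first by exists (fun _ => 0); rewrite big1 // => j _; rewrite scale0r.
  by move=> a _ _ [r ->] [r' ->]; exists (fun j => a * r j + r' j); rewrite comb.
have Hg : linear_on span g by move=> a _ _ [r ->] [r' ->]; rewrite comb !gE comb.
have [f [fL fE]] := baer_extension HL Hspan Hg.
exists (linear_of fL) => j; rewrite linear_ofE -(delta_sum m j) fE.
  by rewrite gE delta_sum.
by exists (fun k => (j == k)%:R).
Qed.

(* Forward direction: the relations of a tuple m form a finitely generated
   submodule of R^n, and its generators give a pp formula freely realized
   by m with respect to absolutely pure modules. *)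
Lemma noetherian_strict_atomic (R : pzRingType) (M : lmodType R) :
  left_noetherian R -> strict_atomic (@abs_pure R) M.
Proof.
move=> HR n m.
pose K := fun r : 'I_n -> R => \sum_j r j *: m j = 0.
have HK : vec_submod K.
  split=> [|a r r' Kr Kr']; first by rewrite /K big1 // => j _; rewrite scale0r.
  rewrite /K; under eq_bigr do rewrite scalerDl -scalerA.
  by rewrite big_split /= -scaler_sumr Kr Kr' scaler0 addr0.
have [p [G [KG Gen]]] := noetherian_vec_fg HR HK.
exists (relations_formula G); split; first exact/relations_formulaP.
move=> L HL c /relations_formulaP Hc.
apply: tuple_hom_extension (noetherian_baer HR HL) _ => r /Gen [e He].
under eq_bigr do rewrite He scaler_suml.
rewrite exchange_big /= big1 // => i _.
by under eq_bigr do rewrite -scalerA; rewrite -scaler_sumr Hc scaler0.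
Qed.

Section CyclicSubmodule.
Variables (R : pzRingType) (N : lmodType R) (c : N).

Record cyclic_sub := CycSub { cyc_val : N; cyc_valP : exists r : R, cyc_val = r *: c }.
HB.instance Definition _ := gen_eqMixin cyclic_sub.
HB.instance Definition _ := gen_choiceMixin cyclic_sub.

Lemma cyclic_sub_ext (a b : cyclic_sub) : cyc_val a = cyc_val b -> a = b.
Proof.
case: a b => va Ha [vb Hb] /= E; subst vb.
by rewrite (Prop_irrelevance Ha Hb).
Qed.

Let cyc_zeroP : exists r : R, (0 : N) = r *: c. Proof. by exists 0; rewrite scale0r. Qed.
Definition cyc_zero := CycSub cyc_zeroP.

Let cyc_addP (a b : cyclic_sub) : exists r : R, cyc_val a + cyc_val b = r *: c.
Proof.
case: a b => va [r Ea] [vb [r' Eb]] /=.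
by exists (r + r'); rewrite Ea Eb scalerDl.
Qed.
Definition cyc_add a b := CycSub (cyc_addP a b).

Let cyc_oppP (a : cyclic_sub) : exists r : R, - cyc_val a = r *: c.
Proof. by case: a => va [r Ea] /=; exists (- r); rewrite Ea scaleNr. Qed.
Definition cyc_opp a := CycSub (cyc_oppP a).

Let cyc_addA : associative cyc_add.
Proof. by move=> a b d; apply: cyclic_sub_ext => /=; rewrite addrA. Qed.
Let cyc_addC : commutative cyc_add.
Proof. by move=> a b; apply: cyclic_sub_ext => /=; rewrite addrC. Qed.
Let cyc_add0 : left_id cyc_zero cyc_add.
Proof. by move=> a; apply: cyclic_sub_ext => /=; rewrite add0r. Qed.
Let cyc_addN : left_inverse cyc_zero cyc_opp cyc_add.
Proof. by move=> a; apply: cyclic_sub_ext => /=; rewrite addNr. Qed.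
HB.instance Definition _ := GRing.isZmodule.Build cyclic_sub cyc_addA cyc_addC cyc_add0 cyc_addN.

Let cyc_scaleP (r : R) (a : cyclic_sub) : exists r' : R, r *: cyc_val a = r' *: c.
Proof. by case: a => va [s Ea] /=; exists (r * s); rewrite Ea scalerA. Qed.
Definition cyc_scale r a := CycSub (cyc_scaleP r a).

Let cyc_scaleA a b v : cyc_scale a (cyc_scale b v) = cyc_scale (a * b) v.
Proof. by apply: cyclic_sub_ext => /=; rewrite scalerA. Qed.
Let cyc_scale1 : left_id 1 cyc_scale.
Proof. by move=> v; apply: cyclic_sub_ext => /=; rewrite scale1r. Qed.
Let cyc_scaleDr : right_distributive cyc_scale +%R.
Proof. by move=> a u v; apply: cyclic_sub_ext => /=; rewrite scalerDr. Qed.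
Let cyc_scaleDl v : {morph cyc_scale^~ v : a b / a + b}.
Proof. by move=> a b; apply: cyclic_sub_ext => /=; rewrite scalerDl. Qed.
HB.instance Definition _ := GRing.Zmodule_isLmodule.Build R cyclic_sub
  cyc_scaleA cyc_scale1 cyc_scaleDr cyc_scaleDl.

Lemma cyc_val_linear a (u v : cyclic_sub) : cyc_val (a *: u + v) = a *: cyc_val u + cyc_val v.
Proof. by []. Qed.

Definition cyc_gen : cyclic_sub := CycSub (ex_intro _ 1 (esym (scale1r c))).
End CyclicSubmodule.

(* For a left ideal W of R, the image c of 1 in the coinduced module has
   annihilator exactly W, so R c is a copy of R / W inside an absolutely pure
   module. *)
Lemma coind_emb_scale (R : pzRingType) (W : R^o -> Prop) (r : R) :
  coind_emb W (r : R^o) = r *: coind_emb W 1.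
Proof. by rewrite -linearZ /=; congr (coind_emb W _); rewrite /GRing.scale /= mulr1. Qed.

Lemma coind_emb_ann (R : pzRingType) (W : R^o -> Prop) (r : R) :
  is_submod W -> r *: coind_emb W (1 : R^o) = 0 <-> W r.
Proof.
move=> HW; rewrite -coind_emb_scale.
by split; [apply: coind_emb_ker | apply: coind_emb_vanish].
Qed.

Definition pp_scalar (R : pzRingType) n (phi : ppf R n) (i : 'I_(pp_m phi))
    (a : 'I_n -> R) (b : 'I_(pp_k phi) -> R) : R :=
  \sum_j pp_A phi i j * a j + \sum_l pp_B phi i l * b l.
Arguments pp_scalar {R n} phi i a b.

Lemma pp_eq_multiples (R : pzRingType) (N : lmodType R) n (phi : ppf R n) i
    (a : 'I_n -> R) (b : 'I_(pp_k phi) -> R) (v : N) :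
  \sum_j pp_A phi i j *: (a j *: v) + \sum_l pp_B phi i l *: (b l *: v) =
  pp_scalar phi i a b *: v.
Proof.
rewrite /pp_scalar scalerDl !scaler_suml.
by congr (_ + _); apply: eq_bigr => j _; rewrite scalerA.
Qed.

(* Backward direction: for a left ideal I, freely realize the generator of
   R c ~ R / I by some phi; the scalars z_i of its equations lie in I, and
   mapping into R c_J ~ R / J for J = sum_i R z_i shows that I = J. *)
Lemma strict_atomic_noetherian (R : pzRingType) :
  (forall M : lmodType R, strict_atomic (@abs_pure R) M) -> left_noetherian R.
Proof.
move=> HM I [I0 ID IM].
have HI : is_submod (I : R^o -> Prop).
  by split=> // a x y Ix Iy; apply: ID => //; apply: IM.
pose c := coind_emb (I : R^o -> Prop) (1 : R^o).
have [phi [[y Hy] Hfree]] := HM _ 1%N (fun _ => cyc_gen c).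
have [b Hb] : exists b : 'I_(pp_k phi) -> R, forall l, cyc_val (y l) = b l *: c.
  by exists (fun l => proj1_sig (cid (cyc_valP (y l)))) => l; case: (cid _).
pose z i := pp_scalar phi i (fun _ => 1) b.
have Iz i : I (z i).
  apply/(coind_emb_ann _ HI); rewrite -pp_eq_multiples.
  pose F := linear_of (@cyc_val_linear _ _ c).
  rewrite -[RHS](linear0 F) -(Hy i) linearD !linear_sum.
  by congr (_ + _); apply: eq_bigr => j _; rewrite linearZ; congr (_ *: _);
    rewrite ?scale1r -?Hb.
pose J := fun a => exists d : 'I_(pp_m phi) -> R, a = \sum_i d i * z i.
have HJ : is_submod (J : R^o -> Prop).
  split; first by exists (fun _ => 0); rewrite big1 // => i _; rewrite mul0r.
  move=> a _ _ [d ->] [d' ->]; exists (fun i => a * d i + d' i).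
  rewrite /GRing.scale /= mulr_sumr -big_split /=; apply: eq_bigr => i _.
  by rewrite mulrDl mulrA.
pose cJ := coind_emb (J : R^o -> Prop) (1 : R^o).
have cJphi : pp_holds phi (fun _ : 'I_1 => cJ).
  exists (fun l => b l *: cJ) => i; rewrite -[cJ in X in X + _]scale1r.
  rewrite pp_eq_multiples; apply/(coind_emb_ann _ HJ).
  by exists (fun k => (i == k)%:R); exact: (esym (delta_sum (z : _ -> R^o) i)).
have [f Hf] := Hfree _ (@coind_abs_pure R R^o J) _ cJphi.
exists (pp_m phi), z; split=> // a; split=> [Ia|[d ->]]; last first.
  by apply: (big_rec (fun t => I t)) => // i t _ It; apply: ID => //; apply: IM.
have ax0 : a *: cyc_gen c = 0.
  by apply: cyclic_sub_ext => /=; apply/(coind_emb_ann _ HI).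
by apply/(coind_emb_ann _ HJ); rewrite -/cJ -(Hf ord0) -linearZ ax0 linear0.
Qed.

Lemma int_noetherian : left_noetherian int.
Proof.
move=> I [I0 ID IM].
case: (int_ideal_principal I0 ID IM) => [I00|[o [o0 Io oI]]].
  exists 0%N, (fun _ => 0); split=> [[]//|x]; split.
    by move/I00 ->; exists (fun _ => 0); rewrite big_ord0.
  by move=> [c ->]; rewrite big_ord0.
exists 1%N, (fun _ => o%:Z); split=> // x; split.
  by move/oI => [q ->]; exists (fun _ => q); rewrite big_ord1.
by move=> [d ->]; rewrite big_ord1; apply: IM.
Qed.

Theorem proposition2p14 (R : pzRingType) :
  (left_noetherian R <->
     forall M : lmodType R, strict_atomic (@abs_pure R) M) /\
  (forall G : lmodType int, strict_atomic (@abs_pure int) G).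
Proof.
split; first split.
- by move=> HR M; exact: noetherian_strict_atomic.
- exact: strict_atomic_noetherian.
by move=> G; apply: noetherian_strict_atomic; exact: int_noetherian.
Qed.
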